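(* Let $\theta\in\mathbb{R}^d$ parameterize a differentiable model with success probability $P_\theta\in(0,1]$ and score $s(\theta)\triangleq\nabla_\theta\log P_\theta$. Fix $q\in[0,1]$, a target $\delta\in(0,1/2]$ and a constant $C>0$. For $p_0\in(0,\delta)$, let $\theta(t)$ be a solution of the gradient flow $\dot\theta=-\nabla_\theta\ell_q(\theta)$ with $P_{\theta(0)}=p_0$, and suppose $\|s(\theta(t))\|\le C$ for all $t\ge0$. Let $T_q(p_0,\delta)\triangleq\inf\{t\ge0: P_{\theta(t)}\ge\delta\}$. Then $$T_q(p_0,\delta)\ \ge\ \frac{1}{C^2}\int_{p_0}^{\delta}u^{-(2-q)}\,du,$$ and consequently, as $p_0\to0$ (with $q,\delta,C$ fixed), $T_q(p_0,\delta)=\Omega\!\left(\frac{p_0^{-(1-q)}}{1-q}\right)$ for $q\in[0,1)$ and $T_1(p_0,\delta)=\Omega\!\left(\log\frac1{p_0}\right)$.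
   Context: The Tsallis $q$-logarithm is $\log_q(u)=\frac{u^{1-q}-1}{1-q}$ ($q<1$), $\log_1(u)=\log u$, and $\ell_q(\theta)\triangleq-\log_q P_\theta$. *)

From HB Require Import structures.
From mathcomp Require Import all_boot all_order all_algebra.
From mathcomp Require Import all_classical all_reals all_analysis.
Set Implicit Arguments. Unset Strict Implicit. Unset Printing Implicit Defensive.
Import Order.TTheory GRing.Theory Num.Theory.
Import numFieldNormedType.Exports.
Local Open Scope classical_set_scope.
Local Open Scope ring_scope.

Section Defs.
Variables (R : realType) (d : nat).

Definition ebasis (i : 'I_d) : 'rV[R]_d := delta_mx 0 i.

Definition grad (f : 'rV[R]_d -> R) (x : 'rV[R]_d) : 'rV[R]_d :=
  \row_i ('D_(ebasis i) f x).

Definition enorm (v : 'rV[R]_d) : R := Num.sqrt (\sum_i v 0 i ^+ 2).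

Definition logq (q u : R) : R :=
  if q == 1 then ln u else (u `^ (1 - q) - 1) / (1 - q).

Definition ellq (P : 'rV[R]_d -> R) (q : R) (x : 'rV[R]_d) : R :=
  - logq q (P x).

Definition score (P : 'rV[R]_d -> R) (x : 'rV[R]_d) : 'rV[R]_d :=
  grad (fun y => ln (P y)) x.

Definition admissible_flow (P : 'rV[R]_d -> R) (q C p0 : R)
    (theta : R -> 'rV[R]_d) : Prop :=
  {within `[0, +oo[, continuous theta} /\
  (forall t : R, 0 < t -> is_derive t 1 theta (- grad (ellq P q) (theta t))) /\
  P (theta 0) = p0 /\
  (forall t : R, 0 <= t -> enorm (score P (theta t)) <= C).

(* hitting time T_q(p0, delta) = inf { t >= 0 : P_{theta(t)} >= delta }
   (in the extended reals; +oo if never reached) *)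
Definition hitting_time (P : 'rV[R]_d -> R) (delta : R)
    (theta : R -> 'rV[R]_d) : \bar R :=
  ereal_inf [set t%:E | t in [set t : R | 0 <= t /\ delta <= P (theta t)]].

End Defs.

From HB Require Import structures.
From mathcomp Require Import all_boot all_order all_algebra.
From mathcomp Require Import all_classical all_reals all_analysis.
From mathcomp Require Import ring lra.
Import Order.TTheory GRing.Theory Num.Theory.
Import numFieldNormedType.Exports.
Local Open Scope classical_set_scope.
Local Open Scope ring_scope.

(* Along the flow write L = ln P_theta, so that L' = <s, theta'> and the flow
   velocity is theta' = P^(1-q) s = e^((1-q)L) s.  The potential
   G = log_(2-q) P = log_(2-q) (e^L) has dG/dL = e^((q-1)L), so the powers of P
   cancel and G' = ||s||^2 <= C^2.  Hence G(t) - G(0) <= C^2 t, and since G is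
   increasing in P, any t with P_theta(t) >= delta satisfies
   int_p0^delta u^(q-2) du = log_(2-q) delta - log_(2-q) p0 <= C^2 t. *)

Section Logq.
Context {R : realType}.

Lemma is_derive_logq (r u : R) : 0 < u -> is_derive u 1 (logq r) (u `^ (- r)).
Proof.
move=> u0; rewrite /logq; have [->|r1] := eqVneq r 1.
  by rewrite powRN powRr1 ?ltW //; exact: is_derive1_ln.
have k0 : 1 - r != 0 by rewrite subr_eq0 eq_sym.
have -> : (fun u : R => (u `^ (1 - r) - 1) / (1 - r)) =
    (1 - r)^-1 \*: (@powR R ^~ (1 - r) - cst 1).
  by apply/funext => x /=; rewrite mulrC.
have -> : u `^ (- r) = (1 - r)^-1 *: ((1 - r) * u `^ (1 - r - 1) - 0).
  by rewrite subr0 [_ *: _]mulrA mulVf // mul1r addrAC subrr add0r.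
by apply/is_deriveZ/is_deriveB; exact: is_derive1_powR.
Qed.

Lemma is_derive_logq_expR (r L : R) :
  is_derive L 1 (fun x => logq r (expR x)) (expR ((1 - r) * L)).
Proof.
have := is_derive1_comp (is_derive_logq r _ (expR_gt0 L)) (is_derive_expR L).
by rewrite -expRM -expRD mulrC mulrBl mul1r mulNr addrC.
Qed.

Lemma ler_logq (r x y : R) : 0 < x -> x <= y -> logq r x <= logq r y.
Proof.
move=> x0 xy; rewrite -subr_ge0.
have pos c : c \in `[x, y] -> 0 < c.
  by move=> cxy; apply: lt_le_trans x0 _; rewrite (itvP cxy).
have [|c cxy ->] := MVT_segment xy
  (fun c cxy => is_derive_logq r _ (pos c (subset_itv_oo_cc cxy))).
  apply: continuous_in_subspaceT => c /[!inE] /pos c0.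
  exact/differentiable_continuous/derivable1_diffP/ex_derive/is_derive_logq.
by rewrite mulr_ge0 ?subr_ge0 // ltW // powR_gt0 // pos.
Qed.

Lemma integral_powR_logq (r a b : R) : 0 < a < b ->
  (\int[lebesgue_measure]_(u in `[a, b]) (u `^ (- r))%:E =
   (logq r b - logq r a)%:E)%E.
Proof.
case/andP=> a0 ab.
have pos x : a <= x -> 0 < x by exact: lt_le_trans.
have dlogq x : a <= x -> is_derive x 1 (logq r) (x `^ (- r)).
  by move=> /pos; exact: is_derive_logq.
rewrite (@continuous_FTC2 _ _ (logq r) _ _ ab) ?EFinB //.
- apply: continuous_in_subspaceT => x /[!inE] xab.
  apply/differentiable_continuous/derivable1_diffP/ex_derive.
  by apply: is_derive1_powR; apply: pos; rewrite (itvP xab).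
- split.
  + by move=> x xab; apply: ex_derive; apply: dlogq; rewrite (itvP xab).
  + apply/cvg_at_right_filter/differentiable_continuous/derivable1_diffP.
    exact/ex_derive/dlogq.
  + apply/cvg_at_left_filter/differentiable_continuous/derivable1_diffP.
    exact/ex_derive/dlogq/ltW.
- move=> x xab; have ax : a <= x by rewrite (itvP xab).
  by rewrite derive1E; have [_ ->] := dlogq x ax.
Qed.

Lemma logq_gap_ge_rate {q delta : R} : q <= 1 -> 0 < delta ->
  exists2 eps : R, 0 < eps & forall p : R, 0 < p < eps ->
    (if q < 1 then p `^ (q - 1) / (1 - q) else ln p^-1) / 2
      <= logq (2 - q) delta - logq (2 - q) p.
Proof.
move=> q1 d0; rewrite /logq; have [->|qn1] := eqVneq q 1.
  exists (delta ^+ 2) => [|p /andP[p0 pd]]; first exact: exprn_gt0.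
  have -> : (2 - 1 : R) = 1 by ring.
  have : ln p < ln delta *+ 2 by rewrite -lnXn // ltr_ln ?posrE ?exprn_gt0.
  by rewrite ltxx eqxx lnV ?posrE // mulr2n; lra.
have qlt : q < 1 by rewrite lt_neqAle qn1.
have k0 : 0 < 1 - q by rewrite subr_gt0.
(* below eps = delta 2^(-1/(1-q)) one has p^(q-1) >= 2 delta^(q-1) *)
exists (expR (ln delta - ln 2 / (1 - q))) => [|p /andP[p0 pe]].
  exact: expR_gt0.
have -> : (2 - q == 1) = false.
  by apply/negbTE/eqP => h; apply: (negP qn1); apply/eqP; lra.
have -> : 1 - (2 - q) = q - 1 by ring.
rewrite qlt /powR !gt_eqF //.
have hp : ln p < ln delta - ln 2 / (1 - q) by rewrite -ltr_expR lnK ?posrE.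
have hAB : 2 * expR ((q - 1) * ln delta) <= expR ((q - 1) * ln p).
  rewrite -[X in X * _](@lnK R 2) ?posrE // -expRD ler_expR.
  have : ln 2 < (1 - q) * (ln delta - ln p).
    by rewrite -(ltr_pdivrMl _ _ k0) mulrC; lra.
  nra.
have -> : (q - 1)^-1 = - (1 - q)^-1 by rewrite -invrN opprB.
have kp : 0 < (1 - q)^-1 by rewrite invr_gt0.
move: hAB kp; set A := expR (_ * ln p); set B := expR (_ * ln delta).
set k := (1 - q)^-1; nra.
Qed.
End Logq.

Section Gradient.
Context {R : realType} {d : nat}.

Lemma sum_sqr_le_enorm (v : 'rV[R]_d) (C : R) :
  enorm v <= C -> \sum_i v 0 i ^+ 2 <= C ^+ 2.
Proof.
move=> vC; have S0 : 0 <= \sum_i v 0 i ^+ 2.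
  by apply: sumr_ge0 => i _; exact: sqr_ge0.
rewrite -(sqr_sqrtr S0) lerXn2r // nnegrE ?sqrtr_ge0 //.
exact: le_trans (sqrtr_ge0 _) vC.
Qed.

Lemma diff_grad (g : 'rV[R]_d -> R) x v : differentiable g x ->
  'd g x v = \sum_i v 0 i * grad g x 0 i.
Proof.
move=> dg; rewrite {1}(row_sum_delta v) linear_sum; apply: eq_bigr => i _.
by rewrite linearZ /= mxE deriveE.
Qed.

Lemma grad_comp (phi : R -> R) (f : 'rV[R]_d -> R) x :
  differentiable f x -> derivable phi (f x) 1 ->
  grad (phi \o f) x = 'D_1 phi (f x) *: grad f x.
Proof.
move=> df /derivable1_diffP dphi; apply/rowP => i; rewrite !mxE.
rewrite deriveE; last exact: differentiable_comp.
rewrite diff_comp //= [in RHS]deriveE // [in RHS]deriveE // diff1E //.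
by rewrite [_ *: _]mulrC [1 *: _]mul1r.
Qed.

Lemma is_derive_comp_path {g : 'rV[R]_d -> R} {th : R -> 'rV[R]_d} {t w} :
  differentiable g (th t) -> is_derive t 1 th w ->
  is_derive t 1 (g \o th) (\sum_i w 0 i * grad g (th t) 0 i).
Proof.
move=> dg [dth <-]; have dth' : differentiable th t by apply/derivable1_diffP.
apply: DeriveDef; first exact/derivable1_diffP/differentiable_comp.
rewrite deriveE; last exact: differentiable_comp.
by rewrite diff_comp //= -diff_grad // deriveE.
Qed.
End Gradient.

Section Flow.
Context {R : realType} {d : nat} {P : 'rV[R]_d -> R}.
Hypothesis dP : forall x, differentiable P x.
Hypothesis P_gt0 : forall x, 0 < P x.

Lemma differentiable_ln_P x : differentiable (fun y => ln (P y)) x.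
Proof.
apply: (@differentiable_comp _ _ _ _ P (@ln R)) => //.
exact/derivable1_diffP/ex_derive/is_derive1_ln.
Qed.

Lemma grad_comp_ln_P {phi dphi : R -> R} (x : 'rV[R]_d) :
  (forall L : R, is_derive L 1 phi (dphi L)) ->
  grad (phi \o (fun y => ln (P y))) x = dphi (ln (P x)) *: score P x.
Proof.
move=> dphiE; rewrite grad_comp; last exact: ex_derive.
  by have [_ ->] := dphiE (ln (P x)).
exact: differentiable_ln_P.
Qed.

Lemma grad_ellq (q : R) x :
  grad (ellq P q) x = - expR ((1 - q) * ln (P x)) *: score P x.
Proof.
have -> : ellq P q = (fun L => - logq q (expR L)) \o (fun y => ln (P y)).
  by apply/funext => y; rewrite /ellq /= lnK ?posrE.
apply: (@grad_comp_ln_P (fun L => - logq q (expR L))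
  (fun L => - expR ((1 - q) * L))) => L.
by have := is_deriveN (is_derive_logq_expR q L).
Qed.

Lemma is_derive_flow_potential (q : R) (theta : R -> 'rV[R]_d) (t : R) :
  is_derive t 1 theta (- grad (ellq P q) (theta t)) ->
  is_derive t 1 (fun s => logq (2 - q) (P (theta s)))
    (\sum_i score P (theta t) 0 i ^+ 2).
Proof.
move=> dtheta.
have -> : (fun s => logq (2 - q) (P (theta s))) =
    ((fun L => logq (2 - q) (expR L)) \o (fun y => ln (P y))) \o theta.
  by apply/funext => s; rewrite /= lnK ?posrE.
have dG : differentiable
    ((fun L => logq (2 - q) (expR L)) \o (fun y => ln (P y))) (theta t).
  apply: differentiable_comp; first exact: differentiable_ln_P.
  exact/derivable1_diffP/ex_derive/is_derive_logq_expR.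
apply: is_derive_eq (is_derive_comp_path dG dtheta) _.
rewrite (grad_comp_ln_P _ (is_derive_logq_expR (2 - q))).
apply: eq_bigr => i _; rewrite grad_ellq !mxE.
set a := expR (_ * _); set b := expR (_ * _).
have ab : a * b = 1.
  by rewrite -expRD -mulrDl (_ : 1 - q + (1 - (2 - q)) = 0) ?mul0r ?expR0 //; ring.
by rewrite expr2 -[RHS]mul1r -ab; ring.
Qed.

Lemma flow_potential_le {q C p0 : R} {theta : R -> 'rV[R]_d} :
  admissible_flow P q C p0 theta -> forall t, 0 < t ->
  logq (2 - q) (P (theta t)) - logq (2 - q) p0 <= C ^+ 2 * t.
Proof.
case=> ctheta [dtheta [<- scoreC]] t t_gt0.
have ctheta0t : {within `[0, t], continuous theta}.
  apply: continuous_subspaceW ctheta => s /=.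
  by rewrite !in_itv /= => /andP[-> _].
have cG : {within `[0, t], continuous (fun s => logq (2 - q) (P (theta s)))}.
  have clogqP : continuous (logq (2 - q) \o P).
    move=> y; apply: continuous_comp; first exact/differentiable_continuous.
    exact/differentiable_continuous/derivable1_diffP/ex_derive/is_derive_logq.
  by move=> s; exact: continuous_comp (ctheta0t s) (clogqP _).
have dG c : c \in `]0, t[ ->
    is_derive c 1 (fun s => logq (2 - q) (P (theta s)))
      (\sum_i score P (theta c) 0 i ^+ 2).
  by move=> c0t; apply/is_derive_flow_potential/dtheta; rewrite (itvP c0t).
have [c c0t ->] := MVT t_gt0 dG cG.
rewrite subr0 (ler_wpM2r (ltW t_gt0)) //; apply/sum_sqr_le_enorm/scoreC.
by rewrite (itvP c0t).
Qed.

Lemma hitting_time_ge {q C delta p0 : R} {theta : R -> 'rV[R]_d} :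
  0 < C -> 0 < p0 < delta -> admissible_flow P q C p0 theta ->
  ((C ^- 2 * (logq (2 - q) delta - logq (2 - q) p0))%:E
    <= hitting_time P delta theta)%E.
Proof.
move=> C_gt0 /andP[p0_gt0 p0_lt_delta] flow.
apply: le_ereal_inf_tmp => _ [t [t_ge0 hit] <-]; rewrite lee_fin.
have t_gt0 : 0 < t.
  rewrite lt_neqAle t_ge0 andbT; apply/eqP => t0.
  case: flow => _ [_ [theta0 _]].
  by move: hit; rewrite -t0 theta0 leNgt p0_lt_delta.
rewrite ler_pdivrMl ?exprn_gt0 //.
apply: le_trans (flow_potential_le flow t t_gt0).
by rewrite lerD2r; exact: ler_logq (lt_trans p0_gt0 p0_lt_delta) hit.
Qed.
End Flow.

Theorem mainTheorem7 (R : realType) (d : nat) (P : 'rV[R]_d -> R)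
  (q delta C : R) :
  (forall x, differentiable P x) ->
  (forall x, 0 < P x <= 1) ->
  0 <= q <= 1 ->
  0 < delta <= 2^-1 ->
  0 < C ->
  (* integral lower bound *)
  (forall (p0 : R) (theta : R -> 'rV[R]_d),
     0 < p0 < delta ->
     admissible_flow P q C p0 theta ->
     ((C ^- 2)%:E * \int[lebesgue_measure]_(u in `[p0, delta]) (u `^ (q - 2))%:E
       <= hitting_time P delta theta)%E)
  /\
  (* asymptotics as p0 -> 0 *)
  (exists c : R, 0 < c /\ exists eps : R, 0 < eps /\
     forall (p0 : R) (theta : R -> 'rV[R]_d),
       0 < p0 < eps -> p0 < delta ->
       admissible_flow P q C p0 theta ->
       ((c * (if q < 1 then p0 `^ (q - 1) / (1 - q) else ln (p0^-1)))%:E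
         <= hitting_time P delta theta)%E).
Proof.
move=> dP P_bounds /andP[_ q_le1] /andP[delta_gt0 _] C_gt0.
have P_gt0 x : 0 < P x by case/andP: (P_bounds x).
split=> [p0 theta p0_itv flow|].
  have -> : q - 2 = - (2 - q) by rewrite opprB.
  rewrite integral_powR_logq // -EFinM.
  exact (hitting_time_ge dP P_gt0 C_gt0 p0_itv flow).
have [eps eps_gt0 gap] := logq_gap_ge_rate q_le1 delta_gt0.
exists (C ^- 2 / 2); split; first by rewrite divr_gt0 // invr_gt0 exprn_gt0.
exists eps; split => // p0 theta p0_lt_eps p0_lt_delta flow.
have p0_itv : 0 < p0 < delta by case/andP: p0_lt_eps => -> _.
apply: le_trans (hitting_time_ge dP P_gt0 C_gt0 p0_itv flow).
rewrite lee_fin mulrAC -mulrA ler_wpM2l ?invr_ge0 ?exprn_ge0 ?(ltW C_gt0) //.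
exact: gap.
Qed.
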